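(* If $G$ is a forest without isolated vertices, then $str(G)=|V(G)|+1$.
   Context: For a graph $G$ of order $p$, a numbering of $G$ is a bijection $f:V(G)\to[1,p]$. The strength of a numbering $f$ is $str_f(G)=\max\{f(u)+f(v): uv\in E(G)\}$, and the strength of a graph $G$ with at least one edge is $str(G)=\min\{str_f(G): f \text{ a numbering of } G\}$. *)

From mathcomp Require Import all_boot.
Set Implicit Arguments. Unset Strict Implicit. Unset Printing Implicit Defensive.

Definition simple_graph (T : finType) (e : rel T) :=
  symmetric e /\ irreflexive e.

Definition is_cycle (T : finType) (e : rel T) (x : T) (p : seq T) : bool :=
  [&& 2 <= size p, uniq (x :: p), path e x p & e (last x p) x].

Definition forest (T : finType) (e : rel T) :=
  forall x p, ~~ is_cycle e x p.

Definition no_isolated (T : finType) (e : rel T) :=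
  forall v : T, exists u, e v u.

(* A numbering is a bijection V -> [1, p]; encoded as an injective
   f : T -> 'I_#|T|, vertex v receiving label f v + 1. *)
Definition numbering (T : finType) (f : {ffun T -> 'I_#|T|}) : bool :=
  injectiveb f.

Definition lab (T : finType) (f : {ffun T -> 'I_#|T|}) (v : T) : nat := (f v).+1.

Definition strength_of (T : finType) (e : rel T) (f : {ffun T -> 'I_#|T|}) : nat :=
  \max_(uv : T * T | e uv.1 uv.2) (lab f uv.1 + lab f uv.2).

(* str(G) = min over numberings f of str_f(G); the default value 2*|V|
   is never attained when G has an edge (every str_f <= 2|V| - 1). *)
Definition strength (T : finType) (e : rel T) : nat :=
  \big[minn/(2 * #|T|)]_(f : {ffun T -> 'I_#|T|} | numbering f) strength_of e f.

From mathcomp Require Import all_boot.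
From mathcomp Require Import zify.
Set Implicit Arguments. Unset Strict Implicit.

(* Lower bound, valid for every graph without isolated vertices: the
   vertex labelled n has a neighbour with label at least 1, so every
   numbering has strength at least n + 1.

   Upper bound, for forests: on every vertex set S of a forest there is a
   labelling g : S -> [0, #|S|) that is injective and has g x + g y < #|S|
   on every edge inside S.  If S spans no edge any injective labelling
   works.  Otherwise the subgraph induced on S has a pendant vertex w with
   unique neighbour u (found by extending a path in S until it gets stuck;
   acyclicity forbids chords back into the path).  Labelling u by 0, w by
   #|S| - 1 and shifting a good labelling of S \ {u, w} by one gives a good
   labelling of S.  Taking S = T and adding 1 yields a numbering of
   strength at most n + 1. *)

Section ForestLabelling.
Variables (T : finType) (e : rel T).
Hypotheses (e_sym : symmetric e) (e_irr : irreflexive e) (acyclic : forest e).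

Definition pendant (S : {set T}) (w u : T) :=
  [/\ w \in S, u \in S, e w u & forall y, y \in S -> e w y -> y = u].

Lemma path_no_chord x p t :
  uniq (x :: p) -> path e x p -> t \in p -> e x t -> t = head x p.
Proof.
move=> hu hp ht; case/splitPr: ht hu hp => p1 p2 hu hp hxt.
have := acyclic x (rcons p1 t).
rewrite /is_cycle last_rcons size_rcons (e_sym t x) hxt andbT.
have -> : uniq (x :: rcons p1 t).
  by move: hu; rewrite -cat_rcons -cat_cons cat_uniq => /andP [].
have -> : path e x (rcons p1 t).
  by move: hp; rewrite -cat_rcons cat_path => /andP [].
by case: p1 {hu hp}.
Qed.

Lemma pendant_or_extend (S : {set T}) x y p :
  uniq (x :: y :: p) -> path e x (y :: p) -> {subset x :: y :: p <= S} ->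
  pendant S x y \/ exists2 t, t \in S & (t \notin x :: y :: p) && e x t.
Proof.
move=> hu hp hS.
case: (boolP [exists t, [&& t \in S, e x t & t != y]]) => [|hno]; last first.
  left; split; [exact/hS/mem_head | by apply: hS; rewrite !inE eqxx orbT
    | by case/andP: hp | move=> z hz hxz].
  by apply/eqP; apply: contraNT hno => hzy; apply/existsP; exists z; rewrite hz hxz hzy.
case/existsP=> t /and3P [htS hxt hty]; right; exists t; rewrite // hxt andbT.
rewrite inE negb_or; apply/andP; split.
  by apply: contraTneq hxt => ->; rewrite e_irr.
by apply: contra hty => /(path_no_chord hu hp) ->.
Qed.

(* Extending a simple path in [S] as long as possible ends at a pendant
   vertex; the fuel [n] bounds the number of extensions, since a simple
   path has at most #|T| vertices. *)
Lemma pendant_of_path (S : {set T}) n : forall x y p,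
  #|T| - size p <= n -> uniq (x :: y :: p) -> path e x (y :: p) ->
  {subset x :: y :: p <= S} -> exists w u, pendant S w u.
Proof.
elim: n => [|n IH] x y p hn hu hp hS.
all: case: (pendant_or_extend hu hp hS) => [hpend|[t htS /andP [ht_new hxt]]];
  first by exists x, y.
- have := max_card (mem (t :: x :: y :: p)).
  by rewrite (card_uniqP _) /= ?ht_new //=; move: hn hu => /=; lia.
- apply: (IH t x (y :: p)) => //=.
  + by move: hn => /=; lia.
  + by rewrite ht_new.
  + by rewrite (e_sym t x) hxt.
  + by move=> z; rewrite inE => /orP [/eqP -> //|]; exact: hS.
Qed.

Lemma pendant_exists (S : {set T}) a b :
  a \in S -> b \in S -> e a b -> exists w u, pendant S w u.
Proof.
move=> ha hb hab; apply: (@pendant_of_path S #|T| a b [::]) => //=.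
- by rewrite subn0.
- by rewrite inE andbT; apply: contraTneq hab => ->; rewrite e_irr.
- by rewrite hab.
- by move=> z; rewrite !inE => /orP [/eqP ->|/eqP ->].
Qed.

Definition good_labelling (S : {set T}) (g : T -> nat) :=
  [/\ {in S &, injective g}, {in S, forall x, g x < #|S|} &
      {in S &, forall x y, e x y -> g x + g y < #|S|}].

Lemma good_labelling_edgeless (S : {set T}) :
  {in S &, forall x y, ~~ e x y} -> exists g, good_labelling S g.
Proof.
move=> noedge; exists (index^~ (enum S)); split.
- by move=> x y hx hy; apply: (index_inj x); rewrite mem_enum.
- by move=> x hx; rewrite cardE index_mem mem_enum.
- by move=> x y hx hy hxy; move: (noedge x y hx hy); rewrite hxy.
Qed.

Lemma pendant_card (S : {set T}) w u :
  pendant S w u -> #|S| = #|S :\ w :\ u|.+2.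
Proof.
case=> hw hu hwu _; have hwu_neq : u != w by apply: contraTneq hwu => ->; rewrite e_irr.
by rewrite (cardsD1 w S) hw (cardsD1 u (S :\ w)) in_setD1 hwu_neq hu.
Qed.

Definition pendant_labelling (S : {set T}) (w u : T) (g : T -> nat) (x : T) :=
  if x == u then 0 else if x == w then #|S|.-1 else (g x).+1.

(* If [w] is pendant in [S] with neighbour [u], this extends a good
   labelling of S \ {w, u} to a good labelling of [S]: the only edge at [w]
   has label sum #|S| - 1, and the edges at [u] gain only the shift. *)
Lemma good_labelling_pendant (S : {set T}) w u g :
  pendant S w u -> good_labelling (S :\ w :\ u) g ->
  good_labelling S (pendant_labelling S w u g).
Proof.
move=> hpend [g_inj g_lt g_edge]; case: (hpend) => hw hu hwu hleaf.
set S' := S :\ w :\ u; set G := pendant_labelling S w u g.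
have hcard : #|S| = #|S'|.+2 by apply: pendant_card.
have inS' x : x \in S -> x != u -> x != w -> x \in S'.
  by move=> hx h1 h2; rewrite !in_setD1 h1 h2 hx.
have uS' : u \notin S' by rewrite !in_setD1 eqxx.
have G_u : G u = 0 by rewrite /G /pendant_labelling eqxx.
have G_cases z : z \in S -> [\/ z = u /\ G z = 0, z = w /\ G z = #|S'|.+1
    | [/\ z \in S', G z = (g z).+1 & g z < #|S'|]].
  rewrite /G /pendant_labelling hcard => hz.
  case: (eqVneq z u) => [->|hzu]; first by constructor 1.
  case: (eqVneq z w) => [->|hzw]; first by constructor 2.
  by constructor 3; split; rewrite ?g_lt ?inS'.
split.
- move=> x y hx hy.
  case: (G_cases x hx) => [[-> ->]|[-> ->]|[hx' -> ?]];
  case: (G_cases y hy) => [[-> ->]|[-> ->]|[hy' -> ?]] //; try lia.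
  by case=> /g_inj; apply.
- move=> x hx; rewrite hcard.
  by case: (G_cases x hx) => [[_ ->]|[_ ->]|[_ -> ?]]; lia.
- move=> x y hx hy hxy; rewrite hcard.
  case: (G_cases x hx) => [[_ ->]|[exw ->]|[hx' -> ?]].
  + by case: (G_cases y hy) => [[_ ->]|[_ ->]|[_ -> ?]]; lia.
  + have -> : y = u by apply: hleaf; rewrite // -exw.
    by rewrite G_u addn0.
  + case: (G_cases y hy) => [[_ ->]|[eyw _]|[hy' -> ?]]; first lia.
      have exu : x = u by apply: hleaf; rewrite // -eyw e_sym.
      by move: hx'; rewrite exu (negPf uS').
    by have := g_edge x y hx' hy' hxy; rewrite -/S'; lia.
Qed.

Lemma good_labelling_exists (S : {set T}) : exists g, good_labelling S g.
Proof.
elim: {S}#|S| {-2}S (leqnn #|S|) => [|n IH] S hS.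
  by apply: good_labelling_edgeless => x y hx; move: hS; rewrite (cardD1 x) hx.
case: (boolP [exists a, exists b, [&& a \in S, b \in S & e a b]]).
- case/existsP=> a /existsP [b /and3P [ha hb hab]].
  have [w [u hpend]] := pendant_exists ha hb hab.
  have [g hg] : exists g, good_labelling (S :\ w :\ u) g.
    by apply: IH; move: hS; rewrite (pendant_card hpend) ltnS => /ltnW.
  by exists (pendant_labelling S w u g); apply: good_labelling_pendant.
- move=> hno; apply: good_labelling_edgeless => x y hx hy.
  by apply: contra hno => hxy; apply/existsP; exists x; apply/existsP; exists y;
    rewrite hx hy hxy.
Qed.

End ForestLabelling.

Lemma bigmin_le_term (I : finType) (P : pred I) (F : I -> nat) x i0 :
  P i0 -> \big[minn/x]_(i | P i) F i <= F i0.
Proof.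
move=> hP; have : i0 \in index_enum I by rewrite mem_index_enum.
rewrite unlock; elim: (index_enum I) => //= j s IH.
rewrite inE => /orP [/eqP <-|/IH h]; first by rewrite hP geq_minl.
by case: (P j) => //; apply: leq_trans (geq_minr _ _) h.
Qed.

Lemma forest_strength_ub (T : finType) (e : rel T) :
  simple_graph e -> forest e -> strength e <= #|T|.+1.
Proof.
move=> [e_sym e_irr] acyclic.
have [g [g_inj g_lt g_edge]] := good_labelling_exists e_sym e_irr acyclic [set: T].
have g_ord x : g x < #|T| by rewrite -cardsT g_lt ?inE.
pose f := [ffun x => Ordinal (g_ord x)] : {ffun T -> 'I_#|T|}.
have hf : numbering f.
  by apply/injectiveP => x y; rewrite !ffunE => -[] /g_inj; apply; rewrite inE.
apply: leq_trans (bigmin_le_term _ _ hf) _.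
apply/bigmax_leqP => -[x y] /= hxy; rewrite /lab !ffunE /=.
by have := g_edge x y (in_setT x) (in_setT y) hxy; rewrite cardsT addSn addnS ltnS.
Qed.

Lemma strength_lb (T : finType) (e : rel T) :
  0 < #|T| -> no_isolated e -> #|T|.+1 <= strength e.
Proof.
move=> hT noiso; rewrite /strength.
apply: (big_ind (fun m => #|T|.+1 <= m)); first lia.
  by move=> a b ha hb; rewrite leq_min ha hb.
move=> f /injectiveP f_inj.
have f_onto := inj_card_onto f_inj (eq_leq (card_ord #|T|)).
have top_label : #|T|.-1 < #|T| by rewrite ltn_predL.
have /codomP [v hv] := f_onto (Ordinal top_label).
have [u hvu] := noiso v.
apply: leq_trans (leq_bigmax_cond
  (F := fun uv : T * T => lab f uv.1 + lab f uv.2) (v, u) hvu).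
by rewrite /lab /= -hv /=; lia.
Qed.

Theorem mainTheorem3 (T : finType) (e : rel T) :
  0 < #|T| -> simple_graph e -> forest e -> no_isolated e ->
  strength e = #|T|.+1.
Proof.
move=> hT hsimple hforest hnoiso; apply/eqP; rewrite eqn_leq.
by rewrite forest_strength_ub // strength_lb.
Qed.
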